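(* Let $(A,G,\alpha)$ be a C*-dynamical system and $(J,H,\beta)$ a regular C*-dynamical subsystem. Then $(A,G,\alpha)$ is sub-induced from $(J,H,\beta)$ if and only if $H=\{g\in G:\alpha_g(J)=J\}$ and the ideals $\{\alpha_g(J)\}_{gH\in G/H}$ are pairwise orthogonal.
   Context: A C*-dynamical system $(A,G,\alpha)$: C*-algebra $A$, discrete group $G$, action $\alpha$. A closed ideal is regular if $J=J^{\perp\perp}$ ($X^\perp=\{a:ax=xa=0\ \forall x\in X\}$); ideals are orthogonal if they intersect trivially. A regular C*-dynamical subsystem $(J,H,\beta)$: $H\le G$, $J$ an $H$-invariant regular ideal of $A$, $\beta$ the restriction of $\alpha$. A system $(K,G,\gamma)$ is induced from $(J,H,\beta)$ if $\{\gamma_g(J)\}_{gH\in G/H}$ are pairwise orthogonal, $(\bigcup_g\gamma_g(J))^{\perp\perp}=K$, and $H=\{g:\gamma_g(J)=J\}$. $(A,G,\alpha)$ is sub-induced from $(J,H,\beta)$ if there is a nonzero $G$-invariant regular ideal $K\trianglelefteq A$ containing $J$ such that $(K,G,\alpha|_K)$ is induced from $(J,H,\beta)$. *)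

From HB Require Import structures.
From mathcomp Require Import all_boot all_order all_algebra.
From mathcomp Require Import complex.
From mathcomp Require Import all_classical all_reals all_analysis.
Set Implicit Arguments. Unset Strict Implicit. Unset Printing Implicit Defensive.
Import Order.TTheory GRing.Theory Num.Theory.
Import numFieldNormedType.Exports.
Local Open Scope classical_set_scope.
Local Open Scope ring_scope.
Local Open Scope complex_scope.

Section CStar.
Variable R : realType.
Variable A : completeNormedModType R[i].
Variables (mul : A -> A -> A) (star : A -> A).

Record cstar_axioms : Prop := CstarAxioms {
  cs_mulA : forall x y z, mul x (mul y z) = mul (mul x y) z;
  cs_mulDl : forall x y z, mul (x + y) z = mul x z + mul y z;
  cs_mulDr : forall x y z, mul x (y + z) = mul x y + mul x z;
  cs_mulZl : forall (c : R[i]) x y, mul (c *: x) y = c *: mul x y;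
  cs_mulZr : forall (c : R[i]) x y, mul x (c *: y) = c *: mul x y;
  cs_starK : forall x, star (star x) = x;
  cs_starD : forall x y, star (x + y) = star x + star y;
  cs_starZ : forall (c : R[i]) x, star (c *: x) = (Num.conj c) *: star x;
  cs_starM : forall x y, star (mul x y) = mul (star y) (star x);
  cs_norm_mul : forall x y, `|mul x y| <= `|x| * `|y|;
  cs_cstar : forall x, `|mul (star x) x| = `|x| ^+ 2 }.

Definition star_automorphism (f : A -> A) : Prop :=
  [/\ forall x y, f (x + y) = f x + f y,
      forall (c : R[i]) x, f (c *: x) = c *: f x,
      forall x y, f (mul x y) = mul (f x) (f y),
      forall x, f (star x) = star (f x)
    & bijective f].

Definition closed_ideal (J : set A) : Prop :=
  [/\ J 0,
      forall x y, J x -> J y -> J (x + y),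
      forall (c : R[i]) x, J x -> J (c *: x),
      forall a x, J x -> J (mul a x) /\ J (mul x a)
    & closed J].

Definition perp_in (S X : set A) : set A :=
  [set a | S a /\ forall x, X x -> mul a x = 0 /\ mul x a = 0].

Definition perp (X : set A) : set A := perp_in setT X.

Definition regular_ideal (J : set A) : Prop :=
  closed_ideal J /\ J = perp (perp J).

Definition orthogonal_ideals (I K : set A) : Prop := I `&` K = [set 0].
End CStar.

Section Dyn.
Local Open Scope group_scope.
Variable R : realType.
Variable A : completeNormedModType R[i].
Variables (mul : A -> A -> A) (star : A -> A).
Variable G : groupType.

Definition is_subgroup (H : set G) : Prop :=
  [/\ H 1, forall g h, H g -> H h -> H (g * h) & forall g, H g -> H g^-1].

Definition cstar_action (alpha : G -> A -> A) : Prop :=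
  [/\ forall g, star_automorphism mul star (alpha g),
      forall x, alpha 1 x = x
    & forall g h x, alpha (g * h) x = alpha g (alpha h x)].

(* (J,H,beta) is a regular C*-dynamical subsystem of (A,G,alpha);
   beta is the restriction of alpha, so it is not a separate datum.
   The ideal J is taken nonzero. *)
Definition regular_subsystem (alpha : G -> A -> A) (J : set A) (H : set G) :=
  [/\ is_subgroup H, regular_ideal mul J, J <> [set 0]
    & forall h, H h -> alpha h @` J = J].

(* (K,G,alpha|_K) is induced from (J,H,beta); the annihilators are
   computed inside the C*-algebra K. Distinct cosets gH <> kH are
   exactly those with g^-1 k notin H. *)
Definition induced_from (alpha : G -> A -> A) (K J : set A) (H : set G) :=
  [/\ forall g k, ~ H (g^-1 * k) -> orthogonal_ideals (alpha g @` J) (alpha k @` J),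
      perp_in mul K (perp_in mul K (\bigcup_(g in setT) alpha g @` J)) = K
    & H = [set g | alpha g @` J = J]].

Definition sub_induced (alpha : G -> A -> A) (J : set A) (H : set G) :=
  exists K : set A,
    [/\ K <> [set 0], regular_ideal mul K, (forall g, alpha g @` K = K),
        J `<=` K & induced_from alpha K J H].
End Dyn.

From HB Require Import structures.
From mathcomp Require Import all_boot all_order all_algebra.
From mathcomp Require Import complex.
From mathcomp Require Import all_classical all_reals all_analysis.
Import Order.TTheory GRing.Theory Num.Theory.
Import numFieldNormedType.Exports.
Local Open Scope classical_set_scope.
Local Open Scope ring_scope.
Local Open Scope complex_scope.
Set Implicit Arguments. Unset Strict Implicit.

(* Let U be the union of the translates alpha_g(J). As J is an ideal and
   each alpha_g is an automorphism, U absorbs multiplication on both sides,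
   so its double annihilator K = U^perp^perp is a regular ideal containing J;
   K is G-invariant because automorphisms commute with annihilators, and
   U^perp^perp computed inside K is K itself. Hence (K, G, alpha) is induced
   from (J, H, beta) exactly when H is the stabiliser of J and the translates
   over distinct cosets are orthogonal; the converse is part of the
   definition of being induced. *)

Lemma klipschitz_continuous (K : numFieldType) (V W : normedModType K)
    (k : K) (f : V -> W) :
  0 <= k -> k.-lipschitz f -> continuous f.
Proof.
move=> k_ge0 fk a; apply/cvgrPdist_lt => e e0.
have k1_gt0 : 0 < k + 1 by rewrite ltr_wpDl.
near=> b.
have dist_ab : `|a - b| < e / (k + 1).
  by near: b; apply: cvgr_dist_lt; [exact: cvg_id | rewrite divr_gt0].
apply: (le_lt_trans (fk (a, b) (conj I I))).
apply: (le_lt_trans (y := (k + 1) * `|a - b|)).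
  by rewrite ler_wpM2r // lerDl.
by rewrite -ltr_pdivlMl // mulrC.
Unshelve. all: by end_near.
Qed.

Lemma closed_kernel (K : numFieldType) (V W : normedModType K) (f : V -> W) :
  continuous f -> closed (f @^-1` [set 0]).
Proof.
move=> fc; apply: preimage_closed => [a _|]; first exact: fc.
exact/accessible_closed_set1/hausdorff_accessible/norm_hausdorff.
Qed.

Section Annihilators.
Variable R : realType.
Variable A : completeNormedModType R[i].
Variables (mul : A -> A -> A) (star : A -> A).
Hypothesis hA : cstar_axioms mul star.

Lemma cs_mul0l x : mul 0 x = 0.
Proof. by apply: (@addrI _ (mul 0 x)); rewrite -(cs_mulDl hA) !addr0. Qed.

Lemma cs_mul0r x : mul x 0 = 0.
Proof. by apply: (@addrI _ (mul x 0)); rewrite -(cs_mulDr hA) !addr0. Qed.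

Lemma cs_mulNl x y : mul (- x) y = - mul x y.
Proof. by rewrite -scaleN1r (cs_mulZl hA) scaleN1r. Qed.

Lemma cs_mulNr x y : mul x (- y) = - mul x y.
Proof. by rewrite -scaleN1r (cs_mulZr hA) scaleN1r. Qed.

Lemma lipschitz_mull x : `|x|.-lipschitz (mul^~ x).
Proof.
move=> [a b] _ /=.
by rewrite -cs_mulNl -(cs_mulDl hA) mulrC (cs_norm_mul hA).
Qed.

Lemma lipschitz_mulr x : `|x|.-lipschitz (mul x).
Proof.
move=> [a b] _ /=.
by rewrite -cs_mulNr -(cs_mulDr hA) (cs_norm_mul hA).
Qed.

Lemma closed_perp (X : set A) : closed (perp mul X).
Proof.
have -> : perp mul X = \bigcap_(x in X)
    ((mul^~ x) @^-1` [set 0] `&` (mul x) @^-1` [set 0]).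
  apply/seteqP; split => [a [_ ann] x /ann [] //|a ann].
  by split => // x /ann [].
apply: closed_bigI => x _; apply: closedI; apply: closed_kernel.
  exact: klipschitz_continuous (lipschitz_mull x).
exact: klipschitz_continuous (lipschitz_mulr x).
Qed.

Definition absorbing (X : set A) :=
  forall a x, X x -> X (mul a x) /\ X (mul x a).

Lemma perpS (X Y : set A) : X `<=` Y -> perp mul Y `<=` perp mul X.
Proof. by move=> XY a [_ ann]; split => // x /XY /ann. Qed.

Lemma sub_perp2 (X : set A) : X `<=` perp mul (perp mul X).
Proof. by move=> x Xx; split => // a [_ /(_ x Xx) []]. Qed.

Lemma perp3 (X : set A) : perp mul (perp mul (perp mul X)) = perp mul X.
Proof. by apply/seteqP; split; [apply/perpS/sub_perp2 | apply: sub_perp2]. Qed.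

(* Absorption is needed for [x (a y) = (x a) y = 0] when [y] annihilates X. *)
Lemma perp_ideal (X : set A) : absorbing X -> closed_ideal mul (perp mul X).
Proof.
move=> absX; split; last exact: closed_perp.
- by split => // x _; rewrite cs_mul0l cs_mul0r.
- move=> y z [_ ann_y] [_ ann_z]; split => // x Xx.
  have [yx xy] := ann_y x Xx; have [zx xz] := ann_z x Xx.
  by rewrite (cs_mulDl hA) (cs_mulDr hA) yx xy zx xz addr0.
- move=> c y [_ ann_y]; split => // x Xx; have [yx xy] := ann_y x Xx.
  by rewrite (cs_mulZl hA) (cs_mulZr hA) yx xy scaler0.
- move=> a y [_ ann_y]; split; split => // x Xx; have [ax xa] := absX a x Xx.
  + split; first by rewrite -(cs_mulA hA) (proj1 (ann_y x Xx)) cs_mul0r.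
    by rewrite (cs_mulA hA) (proj2 (ann_y _ xa)).
  + split; first by rewrite -(cs_mulA hA) (proj1 (ann_y _ ax)).
    by rewrite (cs_mulA hA) (proj2 (ann_y x Xx)) cs_mul0l.
Qed.

Lemma perp_absorbing (X : set A) : absorbing X -> absorbing (perp mul X).
Proof. by move/perp_ideal; case. Qed.

Lemma perp_regular (X : set A) : absorbing X -> regular_ideal mul (perp mul X).
Proof. by move=> absX; split; [exact: perp_ideal | rewrite perp3]. Qed.

Lemma perp_in_perp2 (K X : set A) : K `<=` perp mul (perp mul X) ->
  perp_in mul K (perp_in mul K X) = K.
Proof.
move=> sKX; apply/seteqP; split => [a [] // | a Ka]; split => // y [_ ann_y].
by have [_] := sKX a Ka; apply; split.
Qed.

Lemma star_automorphism0 (f : A -> A) : star_automorphism mul star f -> f 0 = 0.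
Proof. by case=> fD _ _ _ _; apply: (@addrI _ (f 0)); rewrite -fD !addr0. Qed.

Lemma image_perp (f : A -> A) (X : set A) : star_automorphism mul star f ->
  f @` perp mul X = perp mul (f @` X).
Proof.
move=> fA; have f0 := star_automorphism0 fA.
case: fA => _ _ fM _ [g fK gK].
apply/seteqP; split => [_ [a [_ ann_a] <-]|b [_ ann_b]].
  by split => // _ [x Xx <-]; have [ax xa] := ann_a x Xx; rewrite -!fM ax xa f0.
exists (g b); last exact: gK.
split => // x Xx; have [bx xb] := ann_b (f x) (ex_intro2 _ _ x Xx erefl).
rewrite -[b]gK -fM -f0 in bx; rewrite -[b]gK -fM -f0 in xb.
by rewrite -(fK (mul _ x)) -(fK (mul x _)) bx xb fK.
Qed.
End Annihilators.

Section Translates.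
Local Open Scope group_scope.
Variable R : realType.
Variable A : completeNormedModType R[i].
Variables (mul : A -> A -> A) (star : A -> A).
Variable G : groupType.
Variable alpha : G -> A -> A.
Hypothesis halpha : cstar_action mul star alpha.

Definition translates (J : set A) := \bigcup_(g in setT) alpha g @` J.

Lemma action_automorphism g : star_automorphism mul star (alpha g).
Proof. by case: halpha. Qed.

Lemma actionVK g x : alpha g (alpha g^-1 x) = x.
Proof. by case: halpha => _ act1 actM; rewrite -actM mulgV act1. Qed.

Lemma sub_translates (J : set A) : J `<=` translates J.
Proof. by case: halpha => _ act1 _ x Jx; exists 1 => //; exists x. Qed.

Lemma absorbing_translates (J : set A) :
  absorbing mul J -> absorbing mul (translates J).
Proof.
move=> absJ a _ [g _ [x Jx <-]].
have [_ _ actM _ _] := action_automorphism g.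
have [ax xa] := absJ (alpha g^-1 a) x Jx.
by split; exists g => //; [exists (mul (alpha g^-1 a) x) | exists (mul x (alpha g^-1 a))];
  rewrite // actM actionVK.
Qed.

Lemma image_translates g (J : set A) : alpha g @` translates J = translates J.
Proof.
case: halpha => _ _ actM; apply/seteqP; split.
  by move=> _ [_ [h _ [x Jx <-]] <-]; exists (g * h) => //; exists x; rewrite ?actM.
move=> _ [h _ [x Jx <-]]; exists (alpha (g^-1 * h) x).
  by exists (g^-1 * h) => //; exists x.
by rewrite -actM mulVKg.
Qed.

Lemma image_perp2_translates g (J : set A) :
  alpha g @` perp mul (perp mul (translates J)) = perp mul (perp mul (translates J)).
Proof. by rewrite !(image_perp _ (action_automorphism g)) image_translates. Qed.
End Translates.

Unset Implicit Arguments.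
Theorem proposition3p10 (R : realType) (A : completeNormedModType R[i])
  (mul : A -> A -> A) (star : A -> A) (hA : cstar_axioms mul star)
  (G : groupType) (alpha : G -> A -> A) (halpha : cstar_action mul star alpha)
  (J : set A) (H : set G) (hsub : regular_subsystem mul alpha J H) :
  sub_induced mul alpha J H <->
  (H = [set g | alpha g @` J = J] /\
   forall g k : G, ~ H (g^-1 * k)%g ->
     orthogonal_ideals (alpha g @` J) (alpha k @` J)).
Proof.
split=> [[K [_ _ _ _ [orthoJ _ defH]]] // | [defH orthoJ]].
case: hsub => _ [[J0 _ _ absJ _] _] J_neq0 _.
pose K := perp mul (perp mul (translates alpha J)).
have JK : J `<=` K by move=> x Jx; apply/sub_perp2/(sub_translates halpha).
have regK : regular_ideal mul K.
  exact/(perp_regular hA)/(perp_absorbing hA)/(absorbing_translates halpha).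
exists K; split => //.
- move=> K0; apply: J_neq0; apply/seteqP; split; first by rewrite -K0.
  by move=> _ ->.
- by move=> g; rewrite /K (image_perp2_translates halpha).
- by split => //; apply: (@perp_in_perp2 _ _ _ K (translates alpha J)).
Qed.
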